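(* Let $\mathcal{H},\mathcal{K}$ be complex Hilbert spaces of dimension greater than $2$, and let $(f_*,f^* ):(\mathsf{P}(\mathcal{H}),\mathsf{L}(\mathcal{H}),\bar e_{\mathcal{H}})\to(\mathsf{P}(\mathcal{K}),\mathsf{L}(\mathcal{K}),\bar e_{\mathcal{K}})$ be a Chu morphism with $f_*$ injective. Then there is a semiunitary $U:\mathcal{H}\to\mathcal{K}$ such that $f_*=\mathsf{P}(U)$, i.e. $f_*([\psi])=[U\psi]$ for all nonzero $\psi\in\mathcal{H}$. Moreover $U$ is unique up to multiplication by a scalar of modulus $1$.
   Context: A Chu space over $[0,1]$ is a triple $(X,A,e)$ with $e:X\times A\to[0,1]$; a Chu morphism $(X,A,e)\to(X',A',e')$ is a pair $(f_*:X\to X',\,f^*:A'\to A)$ with $e(x,f^*(a'))=e'(f_*(x),a')$ for all $x,a'$. For a complex Hilbert space $\mathcal{H}$: $\mathsf{L}(\mathcal{H})$ is the set of closed subspaces, $P_S$ the orthogonal projector onto $S$, $\mathsf{P}(\mathcal{H})$ the set of rays $[\psi]=\{\lambda\psi:\lambda\in\mathbb{C}\}$ with $\psi\ne0$, and $\bar e_{\mathcal{H}}([\psi],S)=\|P_S\psi\|^2/\|\psi\|^2$. A map $U:\mathcal{H}\to\mathcal{K}$ is semiunitary if it is a bijection with $U(\phi+\psi)=U\phi+U\psi$, $U(\lambda\phi)=\sigma(\lambda)U\phi$, $\langle U\phi,U\psi\rangle=\sigma(\langle\phi,\psi\rangle)$, where $\sigma$ is the identity or complex conjugation. *)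

From HB Require Import structures.
From mathcomp Require Import all_boot all_order all_algebra.
From mathcomp Require Import boolp classical_sets reals.
From mathcomp Require Import complex.
Set Implicit Arguments. Unset Strict Implicit. Unset Printing Implicit Defensive.
Import Order.TTheory GRing.Theory Num.Theory.
Local Open Scope ring_scope.
Local Open Scope classical_set_scope.

Section Hilbert.
Variable R : realType.
Notation C := (R[i]).
Variable H : lmodType C.
Variable ip : H -> H -> C.

Definition hnorm (x : H) : R := Num.sqrt (complex.Re (ip x x)).

Definition cauchy_seq (u : nat -> H) : Prop :=
  forall eps : R, 0 < eps -> exists N : nat,
    forall m n : nat, (N <= m)%N -> (N <= n)%N -> hnorm (u m - u n) < eps.

Definition converges_to (u : nat -> H) (l : H) : Prop :=
  forall eps : R, 0 < eps -> exists N : nat,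
    forall n : nat, (N <= n)%N -> hnorm (u n - l) < eps.

Record is_hilbert : Prop := IsHilbert {
  ip_linear : forall (a : C) (x y z : H), ip x (a *: y + z) = a * ip x y + ip x z;
  ip_conj : forall x y : H, ip y x = (ip x y)^*;
  ip_pos : forall x : H, 0 <= ip x x;
  ip_definite : forall x : H, ip x x = 0 -> x = 0;
  ip_complete : forall u : nat -> H, cauchy_seq u -> exists l, converges_to u l
}.

Definition dim_gt2 : Prop :=
  exists x1 x2 x3 : H, forall a1 a2 a3 : C,
    a1 *: x1 + a2 *: x2 + a3 *: x3 = 0 -> [/\ a1 = 0, a2 = 0 & a3 = 0].

Definition closed_subspace (S : set H) : Prop :=
  [/\ S 0,
      (forall (a : C) x y, S x -> S y -> S (a *: x + y)) &
      (forall (u : nat -> H) l, (forall n, S (u n)) -> converges_to u l -> S l)].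

Definition LH := {S : set H | closed_subspace S}.

Definition span1 (psi : H) : set H := [set lambda *: psi | lambda in [set: C]].

Definition is_ray (r : set H) : Prop := exists psi : H, psi <> 0 /\ r = span1 psi.

Definition PH := {r : set H | is_ray r}.

(* orthogonal projector P_S psi : the unique p in S with psi - p orthogonal to S
   (it exists and is unique since S is closed and H complete). *)
Definition is_proj (S : set H) (psi p : H) : Prop :=
  S p /\ forall s, S s -> ip s (psi - p) = 0.

Definition proj (S : set H) (psi : H) : H := xget 0 (is_proj S psi).

Definition ray_rep (r : set H) : H := xget 0 (fun psi => r psi /\ psi <> 0).

(* ebar([psi], S) = ||P_S psi||^2 / ||psi||^2  (independent of the representative) *)
Definition ebar (r : PH) (S : LH) : R :=
  let psi := ray_rep (proj1_sig r) in
  hnorm (proj (proj1_sig S) psi) ^+ 2 / hnorm psi ^+ 2.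

End Hilbert.

Definition chu_morphism (R : Type) (X A X' A' : Type)
  (e : X -> A -> R) (e' : X' -> A' -> R) (f_ : X -> X') (f' : A' -> A) : Prop :=
  forall (x : X) (a' : A'), e x (f' a') = e' (f_ x) a'.

Definition semiunitary_with (R : realType) (H K : lmodType R[i])
  (ipH : H -> H -> R[i]) (ipK : K -> K -> R[i])
  (sigma : R[i] -> R[i]) (U : H -> K) : Prop :=
  [/\ bijective U,
      (forall phi psi, U (phi + psi) = U phi + U psi),
      (forall (lambda : R[i]) phi, U (lambda *: phi) = sigma lambda *: U phi) &
      (forall phi psi, ipK (U phi) (U psi) = sigma (ipH phi psi))].

Definition semiunitary (R : realType) (H K : lmodType R[i])
  (ipH : H -> H -> R[i]) (ipK : K -> K -> R[i]) (U : H -> K) : Prop :=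
  semiunitary_with ipH ipK id U \/ semiunitary_with ipH ipK (fun z => z^*) U.

Definition induces (R : realType) (H K : lmodType R[i])
  (ipH : H -> H -> R[i]) (ipK : K -> K -> R[i])
  (fs : PH H -> PH K) (U : H -> K) : Prop :=
  forall (x : PH H) (psi : H), psi <> 0 -> proj1_sig x = span1 psi -> proj1_sig (fs x) = span1 (U psi).

From HB Require Import structures.
From mathcomp Require Import all_boot all_order all_algebra.
From mathcomp Require Import boolp classical_sets reals complex.
From mathcomp.algebra_tactics Require Import ring lra.
Set Implicit Arguments. Unset Strict Implicit. Unset Printing Implicit Defensive.
Import Order.TTheory GRing.Theory Num.Theory.
Local Open Scope ring_scope.
Local Notation "x %:C" := (real_complex _ x) : ring_scope.

(* For nonzero [psi] let [rep psi] be the representative of the ray [f_*[psi]] having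
   the norm of [psi]. Test the Chu condition on the line [S] spanned by [rep phi]:
   [f^*(S)] contains [phi], and a vector of [f^*(S)] orthogonal to [phi] would have the
   same image ray as [phi], which injectivity of [f_*] forbids. So [f^*(S)] is the line
   of [phi], and the Chu condition says that [rep] preserves the transition
   probabilities [|<phi,psi>|^2 / (|phi|^2 |psi|^2)].
   Wigner's argument turns such a map into a semiunitary one. Fix a unit vector [e];
   for [y] orthogonal to [e], rephase [rep (e + y)] so that its component along
   [rep e] is [rep e]. The rephased map preserves norms and [Re <y,z>], hence is real
   linear; it sends [i y] to [i] or [-i] times the image of [y], and additivity forces
   the same sign for every [y], so it is linear or antilinear.
   It is onto: [f^*] of the line of a vector [k] not orthogonal to the range contains
   a nonzero [p], whose image ray is then the line of [k].
   Two semiunitaries inducing [f_*] differ by a scalar on each vector; comparing [x],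
   [z] and [x + z] for independent [x], [z] shows that the scalar is constant, and
   preservation of norms makes it unimodular. *)

Lemma inj_surj_bij (A : choiceType) (B : Type) (a0 : A) (f : A -> B) :
  injective f -> (forall b, exists a, f a = b) -> bijective f.
Proof.
move=> finj fsurj; exists (fun b => xget a0 (fun a => f a = b)) => [a|b].
  by apply: finj; apply: (@xgetPex _ a0 (fun x => f x = f a)); exists a.
exact: (@xgetPex _ a0 (fun a => f a = b)) (fsurj b).
Qed.

Section InnerProduct.
Variables (R : realType) (H : lmodType R[i]) (ip : H -> H -> R[i]).
Hypothesis hH : is_hilbert ip.

Lemma ipDr x y z : ip x (y + z) = ip x y + ip x z.
Proof. by have := ip_linear hH 1 x y z; rewrite scale1r mul1r. Qed.

Lemma ip0r x : ip x 0 = 0.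
Proof. by apply: (addrI (ip x 0)); rewrite -ipDr !addr0. Qed.

Lemma ipZr x a y : ip x (a *: y) = a * ip x y.
Proof. by have := ip_linear hH a x y 0; rewrite !addr0 ip0r addr0. Qed.

Lemma ipC x y : ip x y = (ip y x)^*.
Proof. exact: ip_conj. Qed.

Lemma ipDl x y z : ip (x + y) z = ip x z + ip y z.
Proof. by rewrite ipC ipDr rmorphD /= -!ipC. Qed.

Lemma ipZl a x y : ip (a *: x) y = a^* * ip x y.
Proof. by rewrite ipC ipZr rmorphM /= -!ipC. Qed.

Lemma ip0l x : ip 0 x = 0.
Proof. by rewrite ipC ip0r conjC0. Qed.

Lemma ipNr x y : ip x (- y) = - ip x y.
Proof. by rewrite -scaleN1r ipZr mulN1r. Qed.

Lemma ipNl x y : ip (- x) y = - ip x y.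
Proof. by rewrite -scaleN1r ipZl conjCN1 mulN1r. Qed.

Lemma ipBr x y z : ip x (y - z) = ip x y - ip x z.
Proof. by rewrite ipDr ipNr. Qed.

Lemma ipBl x y z : ip (x - y) z = ip x z - ip y z.
Proof. by rewrite ipDl ipNl. Qed.

Definition ipE := (ipDr, ipDl, ipZr, ipZl, ipNr, ipNl, ip0r, ip0l).

Lemma ipxx_conj x : (ip x x)^* = ip x x.
Proof. by rewrite -ipC. Qed.

Lemma ipxx_eq0 x : (ip x x == 0) = (x == 0).
Proof. by apply/eqP/eqP => [/(ip_definite hH)//|->]; exact: ip0r. Qed.

Lemma ipxx_neq0 x : x != 0 -> ip x x != 0.
Proof. by rewrite ipxx_eq0. Qed.

Lemma ipxx_Re x : (complex.Re (ip x x))%:C = ip x x.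
Proof. exact/RRe_real/ger0_real/ip_pos. Qed.

Lemma Re_ipxx_ge0 x : 0 <= complex.Re (ip x x).
Proof. by rewrite -ler0c ipxx_Re ip_pos. Qed.

Lemma Re_ipxx_gt0 x : x != 0 -> 0 < complex.Re (ip x x).
Proof.
move=> x0; rewrite lt_def Re_ipxx_ge0 andbT; apply/eqP => r0.
by move: (ipxx_neq0 x0); rewrite -ipxx_Re r0 eqxx.
Qed.

Lemma hnorm_sqr_Re x : hnorm ip x ^+ 2 = complex.Re (ip x x).
Proof. by rewrite /hnorm sqr_sqrtr ?Re_ipxx_ge0. Qed.

Lemma hnorm_sqr x : (hnorm ip x ^+ 2)%:C = ip x x.
Proof. by rewrite hnorm_sqr_Re ipxx_Re. Qed.

Lemma ipxx_scale_sqrt (u : H) (q : R) : 0 <= q ->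
  ip ((Num.sqrt q)%:C *: u) ((Num.sqrt q)%:C *: u) = q%:C * ip u u.
Proof.
move=> q0; have realC (a : R) : (a%:C)^* = a%:C.
  by apply: conj_Creal; apply/complex_realP; exists a.
by rewrite ipZl ipZr realC mulrA -rmorphM -expr2 sqr_sqrtr.
Qed.

Lemma exists_unit_vector (x : H) : x != 0 -> exists e, ip e e = 1.
Proof.
move=> x0; set q := (complex.Re (ip x x))^-1.
exists ((Num.sqrt q)%:C *: x); rewrite ipxx_scale_sqrt ?invr_ge0 ?Re_ipxx_ge0 //.
rewrite /q (_ : _%:C = ((complex.Re (ip x x))%:C)^-1); last exact: fmorphV.
by rewrite ipxx_Re mulVf // ipxx_neq0.
Qed.

Definition ipcoef (u v : H) := ip u v / ip u u.

Lemma ip_sub_ipcoef u v : ip u (v - ipcoef u v *: u) = 0.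
Proof.
have [->|u0] := eqVneq u 0; first by rewrite ip0l.
by rewrite ipBr ipZr mulfVK ?subrr // ipxx_neq0.
Qed.

Lemma ipxx_sub_ipcoef u v : let w := v - ipcoef u v *: u in
  ip w w = ip v v - ip u v * ip v u / ip u u.
Proof.
rewrite /ipcoef; have [->|u0] := eqVneq u 0.
  by rewrite !scaler0 subr0 !ip0l !mul0r subr0.
by rewrite !ipE rmorphM fmorphV /= ipxx_conj -ipC; field; exact: ipxx_neq0.
Qed.

Lemma ipxx_sub_ipcoef_le u v :
  ip (v - ipcoef u v *: u) (v - ipcoef u v *: u) <= ip v v.
Proof.
rewrite ipxx_sub_ipcoef lerBlDr lerDl divr_ge0 ?ip_pos //.
by rewrite (ipC v u) mul_conjC_ge0.
Qed.

Lemma cauchy_schwarz_eq u v : u != 0 -> ip u v * ip v u = ip u u * ip v v ->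
  v = ipcoef u v *: u.
Proof.
move=> u0 e; have := ipxx_sub_ipcoef u v.
have -> : ip u v * ip v u / ip u u = ip v v by rewrite e; field; exact: ipxx_neq0.
by rewrite subrr => /eqP; rewrite ipxx_eq0 subr_eq0 => /eqP.
Qed.

Lemma bessel2_eq e h v : ip e e = 1 -> ip e h = 0 -> h != 0 ->
  ip v v = ip e v * ip v e + ip h v * ip v h / ip h h ->
  v = ip e v *: e + (ip h v / ip h h) *: h.
Proof.
move=> ee eh h0 hv; set v1 := v - ipcoef e v *: e.
have hv1 : ip h v1 = ip h v by rewrite ipBr ipZr (ipC h e) eh conjC0 mulr0 subr0.
have hv1' : ip v1 h = ip v h by rewrite ipC hv1 -ipC.
have n1 : ip v1 v1 = ip v v - ip e v * ip v e by rewrite ipxx_sub_ipcoef ee divr1.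
have : ip (v1 - ipcoef h v1 *: h) (v1 - ipcoef h v1 *: h) == 0.
  by rewrite ipxx_sub_ipcoef hv1 hv1' n1 hv; apply/eqP; ring.
rewrite ipxx_eq0 subr_eq0 => /eqP.
rewrite /ipcoef hv1 /v1 /ipcoef ee divr1 => /eqP; rewrite subr_eq => /eqP {1}->.
by rewrite addrC.
Qed.

Lemma span1P (phi x : H) : span1 phi x <-> exists l, x = l *: phi.
Proof. by split=> [[l _ <-]|[l ->]]; exists l. Qed.

Lemma span1_id (phi : H) : span1 phi phi.
Proof. by apply/span1P; exists 1; rewrite scale1r. Qed.

Lemma span1_scale (phi : H) c : c != 0 -> span1 (c *: phi) = span1 phi.
Proof.
move=> c0; apply/seteqP; split=> x /span1P[m ->]; apply/span1P.
  by exists (m * c); rewrite scalerA.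
by exists (m / c); rewrite scalerA mulfVK.
Qed.

Lemma span10 : span1 (0 : H) = [set 0]%classic.
Proof.
apply/seteqP; split=> x; first by case/span1P=> m ->; rewrite scaler0.
by move=> ->; apply: span1_id.
Qed.

Lemma eq_span1 (phi psi : H) : phi != 0 -> span1 phi = span1 psi ->
  exists2 c, c != 0 & psi = c *: phi.
Proof.
move=> p0 e; have := span1_id psi; rewrite -e => /span1P[c hc].
exists c => //; apply: contra_neq p0 => c0; move: e; rewrite hc c0 scale0r span10.
by move=> e; have := span1_id phi; rewrite e.
Qed.

Lemma ray_rep_span1 (phi : H) : phi != 0 ->
  exists2 c, c != 0 & ray_rep (span1 phi) = c *: phi.
Proof.
move=> p0; have [/span1P[c hc] r0] :
    span1 phi (ray_rep (span1 phi)) /\ ray_rep (span1 phi) <> 0.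
  apply: (@xgetPex _ 0 (fun psi : H => span1 phi psi /\ psi <> 0)).
  by exists phi; split; [exact: span1_id | exact/eqP].
by exists c => //; apply/eqP => c0; apply: r0; rewrite hc c0 scale0r.
Qed.

Lemma ipcoef_scale (phi : H) l : ipcoef phi (l *: phi) *: phi = l *: phi.
Proof.
rewrite /ipcoef ipZr; have [->|p0] := eqVneq phi 0; first by rewrite !scaler0.
by rewrite mulfK // ipxx_neq0.
Qed.

Lemma dist_span1_ge (phi l : H) m :
  let w := l - ipcoef phi l *: phi in ip w w <= ip (m *: phi - l) (m *: phi - l).
Proof.
have -> : l - ipcoef phi l *: phi
    = - ((m *: phi - l) - ipcoef phi (m *: phi - l) *: phi).
  rewrite /ipcoef ipBr mulrBl scalerBl -/(ipcoef phi (m *: phi)) ipcoef_scale.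
  by rewrite -/(ipcoef phi l) !opprB [RHS]addrC [RHS]addrA subrK.
by rewrite /= ipNl ipNr opprK; exact: ipxx_sub_ipcoef_le.
Qed.

Lemma ler_sqr_eps (r : R) : 0 <= r -> (forall eps, 0 < eps -> r < eps ^+ 2) -> r = 0.
Proof.
move=> r0 hr; apply/eqP; rewrite eq_le r0 andbT leNgt; apply/negP => rp.
by have := hr (Num.sqrt r); rewrite sqrtr_gt0 rp sqr_sqrtr ?ltxx // => /(_ isT).
Qed.

Lemma span1_closed (phi : H) : closed_subspace ip (span1 phi).
Proof.
split.
- by apply/span1P; exists 0; rewrite scale0r.
- move=> a x y /span1P[l ->] /span1P[m ->]; apply/span1P.
  by exists (a * l + m); rewrite scalerDl scalerA.
move=> u l hu hc; apply/span1P; exists (ipcoef phi l).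
set w := l - ipcoef phi l *: phi.
suff : ip w w = 0 by move/eqP; rewrite ipxx_eq0 subr_eq0 => /eqP.
rewrite -ipxx_Re (@ler_sqr_eps (complex.Re (ip w w))) ?Re_ipxx_ge0 //.
move=> eps /hc[N /(_ N (leqnn N)) hN].
have [m hm] := (span1P _ _).1 (hu N).
have /= := dist_span1_ge phi l m; rewrite -hm -/w lecE -(hnorm_sqr_Re (u N - l)) => /andP[_ hle].
by have := sqrtr_ge0 (complex.Re (ip (u N - l) (u N - l))); rewrite -/(hnorm ip _); nra.
Qed.

Lemma subspaceB (S : set H) x y : closed_subspace ip S -> S x -> S y -> S (x - y).
Proof. by case=> _ Sc _ Sx Sy; have := Sc (-1) y x Sy Sx; rewrite scaleN1r addrC. Qed.

Lemma subspaceZ (S : set H) a x : closed_subspace ip S -> S x -> S (a *: x).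
Proof. by case=> S0 Sc _ Sx; have := Sc a x 0 Sx S0; rewrite addr0. Qed.

Lemma proj_span1 (phi psi : H) : proj ip (span1 phi) psi = ipcoef phi psi *: phi.
Proof.
apply: xget_unique.
  split=> [|s /span1P[m ->]]; first by apply/span1P; exists (ipcoef phi psi).
  by rewrite ipZl ip_sub_ipcoef mulr0.
move=> y [/span1P[m ->] hy]; have [->|p0] := eqVneq phi 0; first by rewrite !scaler0.
move/eqP: (hy phi (span1_id phi)); rewrite ipBr ipZr subr_eq0 => /eqP e.
by rewrite /ipcoef e mulfK // ipxx_neq0.
Qed.

Lemma proj_id (S : set H) psi : closed_subspace ip S -> S psi -> proj ip S psi = psi.
Proof.
move=> cS Spsi; apply: xget_unique; first by split=> // s _; rewrite subrr ip0r.
move=> y [Sy hy]; have := hy _ (subspaceB cS Spsi Sy).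
by move/eqP; rewrite ipxx_eq0 subr_eq0 => /eqP.
Qed.

(* [proj] is defined by choice, with junk value [0] when no projection exists. *)
Lemma projP (S : set H) psi : is_proj ip S psi (proj ip S psi) \/ proj ip S psi = 0.
Proof. by rewrite /proj; case: xgetP => [x _ h|_]; [left|right]. Qed.

Lemma is_proj_pythagoras (S : set H) psi p : is_proj ip S psi p ->
  ip psi psi = ip p p + ip (psi - p) (psi - p).
Proof.
case=> Sp hp; have h1 := hp p Sp; have h2 : ip (psi - p) p = 0 by rewrite ipC h1 conjC0.
move: h1 h2; set d := psi - p => h1 h2.
have -> : psi = d + p by rewrite /d subrK.
clearbody d.
by rewrite ipDl !ipDr h1 h2; ring.
Qed.

Lemma PH_val_inj (x y : PH H) : proj1_sig x = proj1_sig y -> x = y.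
Proof. by case: x => x px; case: y => y py /= e; apply: eq_exist. Qed.

Lemma PH_neq0 (x : PH H) : proj1_sig x <> span1 0.
Proof.
case: x => x [psi [p0 hx]] /= e; apply: p0.
by have := span1_id psi; rewrite -hx e span10.
Qed.

Definition ray_of (phi : H) (h : phi != 0) : PH H :=
  exist _ (span1 phi) (ex_intro _ phi (conj (elimN eqP h) erefl)).

Definition line (phi : H) : LH ip := exist _ (span1 phi) (span1_closed phi).

Definition tprob (u v : H) := ip u v * ip v u / (ip u u * ip v v).

Lemma ebarE (r : PH H) (S : LH ip) : let psi := ray_rep (proj1_sig r) in
  (ebar r S)%:C = ip (proj ip (proj1_sig S) psi) (proj ip (proj1_sig S) psi) / ip psi psi.
Proof. by rewrite /ebar /= -!hnorm_sqr -fmorph_div. Qed.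

Lemma ebar_line (r : PH H) (S : LH ip) (phi psi : H) :
    proj1_sig r = span1 psi -> psi != 0 -> proj1_sig S = span1 phi ->
  (ebar r S)%:C = tprob phi psi.
Proof.
move=> hr p0 hS; rewrite ebarE hr hS proj_span1.
have [c c0 ->] := ray_rep_span1 p0.
rewrite /tprob /ipcoef !ipE !rmorphM fmorphV /= ipxx_conj -!ipC.
have [->|f0] := eqVneq phi 0; first by rewrite !ip0l !ip0r !(mul0r, mulr0, invr0).
have ff := ipxx_neq0 f0; have pp := ipxx_neq0 p0.
have cc : c^* != 0 by rewrite conjC_eq0.
by field; rewrite ff pp c0 cc.
Qed.

Lemma ebar_mem (r : PH H) (S : LH ip) psi : proj1_sig r = span1 psi -> psi != 0 ->
  proj1_sig S psi -> (ebar r S)%:C = 1.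
Proof.
move=> hr p0 Sp; rewrite ebarE hr.
have [c c0 ->] := ray_rep_span1 p0.
rewrite proj_id ?divff ?ipxx_neq0 ?scaler_eq0 ?negb_or ?c0 //; first exact: (proj2_sig S).
exact: (subspaceZ _ (proj2_sig S)).
Qed.

Lemma mem_of_ebar1 (r : PH H) (S : LH ip) psi : proj1_sig r = span1 psi -> psi != 0 ->
  (ebar r S)%:C = 1 -> proj1_sig S psi.
Proof.
move=> hr p0; have cS := proj2_sig S; rewrite ebarE hr.
have [c c0 ->] := ray_rep_span1 p0; set x := c *: psi.
have xx : ip x x != 0 by rewrite ipxx_neq0 // scaler_eq0 negb_or c0.
case: (projP (proj1_sig S) x) => [hp|->]; last first.
  by rewrite ip0r mul0r => /eqP; rewrite eq_sym oner_eq0.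
move=> h1; have h2 : ip (proj ip (proj1_sig S) x) (proj ip (proj1_sig S) x) = ip x x.
  by rewrite -[LHS](mulfVK xx) h1 mul1r.
have := is_proj_pythagoras hp; rewrite h2 -{1}[ip x x]addr0 => /addrI /esym /eqP.
rewrite ipxx_eq0 subr_eq0 => /eqP xE.
have /(subspaceZ c^-1 cS) : proj1_sig S x by rewrite xE; case: hp.
by rewrite /x scalerA mulVf // scale1r.
Qed.

Lemma mem_of_ebar_neq0 (r : PH H) (S : LH ip) :
  (ebar r S)%:C != 0 -> exists2 p, p != 0 & proj1_sig S p.
Proof.
rewrite ebarE; set x := ray_rep _.
case: (projP (proj1_sig S) x) => [hp|->] nz; last by rewrite ip0r mul0r eqxx in nz.
exists (proj ip (proj1_sig S) x); last by case: hp.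
by apply: contraNneq nz => ->; rewrite ip0r mul0r.
Qed.

Lemma tprobC u v : tprob u v = tprob v u.
Proof. by rewrite /tprob [ip u v * _]mulrC [ip u u * _]mulrC. Qed.

Lemma tprob_eq1 u v : u != 0 -> v != 0 -> tprob u v = 1 -> v = ipcoef u v *: u.
Proof.
move=> u0 v0 t1; apply: cauchy_schwarz_eq => //.
have nz : ip u u * ip v v != 0 by rewrite mulf_neq0 // ipxx_neq0.
by rewrite -[LHS](mulfVK nz) -/(tprob u v) t1 mul1r.
Qed.

End InnerProduct.

Section ConjIf.
Variable R : realType.
Implicit Types (b : bool) (x y : R[i]).

(* The [sigma] of [semiunitary_with]: [conj_if true] is the identity,
   [conj_if false] complex conjugation. *)
Definition conj_if b x := if b then x else x^*.

Lemma conj_ifD b x y : conj_if b (x + y) = conj_if b x + conj_if b y.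
Proof. by case: b => //=; rewrite rmorphD. Qed.

Lemma conj_ifM b x y : conj_if b (x * y) = conj_if b x * conj_if b y.
Proof. by case: b => //=; rewrite rmorphM. Qed.

Lemma conj_ifN b x : conj_if b (- x) = - conj_if b x.
Proof. by case: b => //=; rewrite rmorphN. Qed.

Lemma conj_ifJ b x : conj_if b x^* = (conj_if b x)^*.
Proof. by case: b. Qed.

Lemma conj_ifK b : involutive (conj_if b).
Proof. by case: b => x //=; rewrite conjCK. Qed.

Lemma conj_if_real b x : x^* = x -> conj_if b x = x.
Proof. by case: b. Qed.

Lemma conj_if0 b : conj_if b 0 = 0.
Proof. exact/conj_if_real/conjC0. Qed.

Lemma conj_if_eq0 b x : (conj_if b x == 0) = (x == 0).
Proof. by case: b => //=; rewrite conjC_eq0. Qed.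

Lemma unit_imaginaryP x : x^* = - x -> x^* * x = 1 -> x = 'i \/ x = - 'i.
Proof.
move=> xN xx; have : (x - 'i) * (x + 'i) == 0.
  by rewrite -subr_sqr sqrCi -xx xN mulNr -expr2 opprK subrr.
by rewrite mulf_eq0 subr_eq0 addr_eq0 => /orP[] /eqP; [left|right].
Qed.

End ConjIf.

Section Wigner.
Variables (R : realType) (H K : lmodType R[i]) (ipH : H -> H -> R[i]) (ipK : K -> K -> R[i]).
Hypotheses (hH : is_hilbert ipH) (hK : is_hilbert ipK).
Variable g : H -> K.
Hypothesis g_norm : forall x, ipK (g x) (g x) = ipH x x.
Hypothesis g_tprob : forall x y, ipK (g x) (g y) * ipK (g y) (g x) = ipH x y * ipH y x.
Variable e : H.
Hypothesis e_unit : ipH e e = 1.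

Lemma ge_unit : ipK (g e) (g e) = 1. Proof. by rewrite g_norm. Qed.

Lemma g_eq0 x : (g x == 0) = (x == 0).
Proof. by rewrite -(ipxx_eq0 hK) g_norm (ipxx_eq0 hH). Qed.

Lemma orthoC y : ipH e y = 0 -> ipH y e = 0.
Proof. by move=> h; rewrite (ipC hH) h conjC0. Qed.

Lemma orthoD y z : ipH e y = 0 -> ipH e z = 0 -> ipH e (y + z) = 0.
Proof. by move=> hy hz; rewrite (ipDr hH) hy hz addr0. Qed.

Lemma orthoZ c y : ipH e y = 0 -> ipH e (c *: y) = 0.
Proof. by move=> hy; rewrite (ipZr hH) hy mulr0. Qed.

Lemma ortho_sub_ip x : ipH e (x - ipH e x *: e) = 0.
Proof. by rewrite (ipBr hH) (ipZr hH) e_unit mulr1 subrr. Qed.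

Lemma ip_e_add y : ipH e y = 0 -> ipH e (e + y) = 1.
Proof. by move=> h; rewrite (ipDr hH) h e_unit addr0. Qed.

Lemma ipxx_e_add y : ipH e y = 0 -> ipH (e + y) (e + y) = 1 + ipH y y.
Proof. by move=> h; rewrite !(ipDl hH) !(ipDr hH) e_unit h (orthoC h); ring. Qed.

(** For [y] orthogonal to [e], the phase of [g (e + y)] is fixed by making its
    component along [g e] equal to [g e]; [rephased y] is the remainder. *)
Definition phase y := ipK (g e) (g (e + y)).

(* Locked, since otherwise rewriting with [ipBr] unfolds it as a difference. *)
Fact rephased_key : unit. Proof. exact: tt. Qed.
Definition rephased := locked_with rephased_key (fun y => (phase y)^-1 *: g (e + y) - g e).

Lemma rephasedE y : rephased y = (phase y)^-1 *: g (e + y) - g e.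
Proof. by rewrite /rephased unlock. Qed.

Lemma phase_mulC y : ipH e y = 0 -> phase y * (phase y)^* = 1.
Proof.
move=> h; rewrite /phase -(ipC hK) g_tprob (ip_e_add h) (ipC hH (e + y)) (ip_e_add h).
by rewrite conjC1 mulr1.
Qed.

Lemma phase_neq0 y : ipH e y = 0 -> phase y != 0.
Proof.
by move/phase_mulC; apply: contra_eq_neq => ->; rewrite mul0r eq_sym oner_neq0.
Qed.

Lemma phase_conj y : ipH e y = 0 -> (phase y)^* = (phase y)^-1.
Proof.
by move=> h; apply: (mulfI (phase_neq0 h)); rewrite phase_mulC // mulfV ?phase_neq0.
Qed.

Lemma e_add_rephased y : ipH e y = 0 -> g e + rephased y = (phase y)^-1 *: g (e + y).
Proof. by move=> h; rewrite rephasedE addrC subrK. Qed.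

Lemma rephased_ortho y : ipH e y = 0 -> ipK (g e) (rephased y) = 0.
Proof.
move=> h; rewrite rephasedE (ipBr hK) (ipZr hK) -/(phase y).
by rewrite mulVf ?phase_neq0 // ge_unit subrr.
Qed.

Lemma rephased_orthoC y : ipH e y = 0 -> ipK (rephased y) (g e) = 0.
Proof. by move=> h; rewrite (ipC hK) rephased_ortho // conjC0. Qed.

Lemma rephased_norm y : ipH e y = 0 -> ipK (rephased y) (rephased y) = ipH y y.
Proof.
move=> h; rewrite rephasedE !(ipBl hK) !(ipBr hK) !(ipZl hK) !(ipZr hK).
rewrite g_norm (ipxx_e_add h) ge_unit -/(phase y) (ipC hK (g (e + y))) -/(phase y).
rewrite fmorphV /= phase_conj // invrK.
by field; exact: phase_neq0.
Qed.

Lemma rephased0 : rephased 0 = 0.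
Proof. by rewrite rephasedE /phase addr0 ge_unit invr1 scale1r subrr. Qed.

Lemma rephased_eq0 y : ipH e y = 0 -> (rephased y == 0) = (y == 0).
Proof. by move=> h; rewrite -(ipxx_eq0 hK) rephased_norm // (ipxx_eq0 hH). Qed.

Lemma ortho_g y : ipH e y = 0 -> ipK (g e) (g y) = 0.
Proof.
by move=> h; move/eqP: (g_tprob e y); rewrite h mul0r (ipC hK (g y)) mul_conjC_eq0 => /eqP.
Qed.

(* [g (e + y)] has no component outside the plane of [g e] and [g y]:
   equality holds in Bessel's inequality. *)
Lemma g_e_add y : ipH e y = 0 -> y != 0 -> let w := g (e + y) in
  w = ipK (g e) w *: g e + (ipK (g y) w / ipK (g y) (g y)) *: g y.
Proof.
move=> h y0 w; apply: (bessel2_eq hK) (ge_unit) (ortho_g h) _ _; first by rewrite g_eq0.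
rewrite !g_tprob !g_norm (ipxx_e_add h) (ip_e_add h) (ipC hH (e + y) e) (ip_e_add h).
rewrite conjC1 mul1r (ipDr hH) (ipDl hH) (orthoC h) h !add0r.
by field; exact: ipxx_neq0.
Qed.

Lemma rephased_parallel y : ipH e y = 0 -> exists c, rephased y = c *: g y.
Proof.
move=> h; have [->|y0] := eqVneq y 0; first by exists 0; rewrite rephased0 scale0r.
set a := ipK (g y) (g (e + y)) / ipK (g y) (g y).
exists ((phase y)^-1 * a); rewrite rephasedE {1}(g_e_add h y0) -/(phase y) -/a.
by rewrite scalerDr !scalerA mulVf ?phase_neq0 // scale1r addrC addKr.
Qed.

Lemma rephased_tprob y z : ipH e y = 0 -> ipH e z = 0 ->
  ipK (rephased y) (rephased z) * ipK (rephased z) (rephased y) = ipH y z * ipH z y.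
Proof.
have unimodular x c : ipH e x = 0 -> rephased x = c *: g x -> x != 0 -> c^* * c = 1.
  move=> hx hc x0; move/eqP: (rephased_norm hx).
  rewrite hc (ipZl hK) (ipZr hK) g_norm mulrA -{2}(mul1r (ipH x x)).
  by rewrite (inj_eq (mulIf (ipxx_neq0 hH x0))) => /eqP.
move=> hy hz; have [->|y0] := eqVneq y 0.
  by rewrite rephased0 !(ip0l hK) !(ip0r hK) !(ip0l hH) !(ip0r hH) !mul0r.
have [->|z0] := eqVneq z 0.
  by rewrite rephased0 !(ip0l hK) !(ip0r hK) !(ip0l hH) !(ip0r hH) !mul0r.
have [cy ey] := rephased_parallel hy; have [cz ez] := rephased_parallel hz.
rewrite ey ez !(ipZl hK) !(ipZr hK) -g_tprob.
have := unimodular _ _ hy ey y0; have := unimodular _ _ hz ez z0.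
move: (ipK (g y) (g z)) (ipK (g z) (g y)) => A B nz ny.
by transitivity ((cy^* * cy) * (cz^* * cz) * (A * B)); [ring | rewrite ny nz !mul1r].
Qed.

(* [g] preserves [|<y,z>|^2], and the rephasing fixes [<g e, .>] on the vectors [e + y];
   expanding [|<e + y, e + z>|^2] then pins down [Re <y,z>]. *)
Lemma rephased_ipD y z : ipH e y = 0 -> ipH e z = 0 ->
  ipK (rephased y) (rephased z) + ipK (rephased z) (rephased y) = ipH y z + ipH z y.
Proof.
move=> hy hz.
have shift u v : ipH e u = 0 -> ipH e v = 0 ->
    ipK (g e + rephased u) (g e + rephased v) = 1 + ipK (rephased u) (rephased v).
  move=> hu hv; rewrite !(ipDl hK) !(ipDr hK) ge_unit rephased_ortho //.
  by rewrite rephased_orthoC // add0r addr0.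
have unit_inv u : ipH e u = 0 -> ((phase u)^-1)^* * (phase u)^-1 = 1.
  by move=> hu; rewrite fmorphV /= phase_conj // invrK mulfV ?phase_neq0.
have prod : (1 + ipK (rephased y) (rephased z)) * (1 + ipK (rephased z) (rephased y)) =
            (1 + ipH y z) * (1 + ipH z y).
  rewrite -shift // -shift // !e_add_rephased // !(ipZl hK) !(ipZr hK).
  have -> : (1 + ipH y z) * (1 + ipH z y) = ipH (e + y) (e + z) * ipH (e + z) (e + y).
    by rewrite !(ipDl hH) !(ipDr hH) e_unit hy hz (orthoC hy) (orthoC hz); ring.
  rewrite -g_tprob; set A := ipK _ _; set B := ipK _ _.
  transitivity ((((phase y)^-1)^* * (phase y)^-1) * (((phase z)^-1)^* * (phase z)^-1) * (A * B)).
    by ring.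
  by rewrite !unit_inv // !mul1r.
have -> : forall P Q : R[i], P + Q = (1 + P) * (1 + Q) - 1 - P * Q by move=> P Q; ring.
by rewrite prod rephased_tprob //; ring.
Qed.

Lemma rephased_ipC y z : ipH e y = 0 -> ipH e z = 0 ->
  ipK (rephased z) (rephased y) = ipH y z + ipH z y - ipK (rephased y) (rephased z).
Proof. by move=> hy hz; rewrite -rephased_ipD // addrC addKr. Qed.

Lemma rephased_norm_comb a b c r s :
    ipH e a = 0 -> ipH e b = 0 -> ipH e c = 0 -> r^* = r -> s^* = s ->
  ipK (rephased a - r *: rephased b - s *: rephased c)
      (rephased a - r *: rephased b - s *: rephased c)
  = ipH (a - r *: b - s *: c) (a - r *: b - s *: c).
Proof.
move=> ha hb hc hr hs.
rewrite !(ipBl hK) !(ipBr hK) !(ipZl hK) !(ipZr hK).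
rewrite !(ipBl hH) !(ipBr hH) !(ipZl hH) !(ipZr hH) hr hs.
by rewrite (rephased_ipC ha hb) (rephased_ipC ha hc) (rephased_ipC hb hc) !rephased_norm //; ring.
Qed.

Lemma rephasedD y z : ipH e y = 0 -> ipH e z = 0 -> rephased (y + z) = rephased y + rephased z.
Proof.
move=> hy hz; have := rephased_norm_comb (orthoD hy hz) hy hz (conjC1 _) (conjC1 _).
have -> : y + z - 1 *: y - 1 *: z = 0 by rewrite !scale1r (addrC y) addrK subrr.
rewrite (ip0r hH) !scale1r => /eqP; rewrite (ipxx_eq0 hK).
by rewrite subr_eq0 subr_eq => /eqP ->; rewrite addrC.
Qed.

Lemma rephasedZ_real y r : ipH e y = 0 -> r^* = r -> rephased (r *: y) = r *: rephased y.
Proof.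
move=> hy hr; have := rephased_norm_comb (orthoZ r hy) hy hy hr (conjC0 _).
rewrite !scale0r !subr0 subrr (ip0r hH) => /eqP; rewrite (ipxx_eq0 hK).
by rewrite subr_eq0 => /eqP.
Qed.

Lemma rephasedN y : ipH e y = 0 -> rephased (- y) = - rephased y.
Proof. by move=> hy; rewrite -scaleN1r rephasedZ_real ?scaleN1r // conjCN1. Qed.

Lemma rephasedZ_i y : ipH e y = 0 -> y != 0 ->
  rephased ('i *: y) = 'i *: rephased y \/ rephased ('i *: y) = - 'i *: rephased y.
Proof.
move=> hy y0; have hiy := orthoZ 'i hy; have nyy := ipxx_neq0 hH y0.
have iyy : ipH ('i *: y) ('i *: y) = ipH y y.
  by rewrite (ipZl hH) (ipZr hH) conjCi mulrA mulNr -expr2 sqrCi opprK mul1r.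
have hn : ipK (rephased ('i *: y)) (rephased ('i *: y)) = ipH y y by rewrite rephased_norm.
have L : rephased ('i *: y) = ipcoef ipK (rephased y) (rephased ('i *: y)) *: rephased y.
  apply: (cauchy_schwarz_eq hK); first by rewrite rephased_eq0.
  rewrite rephased_tprob // hn rephased_norm // (ipZl hH) (ipZr hH) conjCi.
  have -> : forall A : R[i], 'i * A * (- 'i * A) = - ('i ^+ 2) * A * A by move=> A; ring.
  by rewrite sqrCi opprK mul1r.
set l := ipcoef _ _ _ in L.
have lN : l^* = - l.
  have S := rephased_ipD hy hiy.
  rewrite L (ipZl hK) (ipZr hK) rephased_norm // (ipZl hH) (ipZr hH) conjCi in S.
  have : (l + l^*) * ipH y y == 0 by rewrite mulrDl S; apply/eqP; ring.
  by rewrite mulf_eq0 (negPf nyy) orbF => /eqP ll; apply/eqP; rewrite -addr_eq0 addrC ll.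
have ll : l^* * l = 1.
  move/eqP: hn; rewrite L (ipZl hK) (ipZr hK) rephased_norm // mulrA.
  by rewrite -{2}(mul1r (ipH y y)) (inj_eq (mulIf nyy)) => /eqP.
by rewrite L; case: (unit_imaginaryP lN ll) => ->; [left|right].
Qed.

Lemma rephasedZ_i_sqrN1 y : ipH e y = 0 -> y != 0 ->
  exists2 l, l ^+ 2 = -1 & rephased ('i *: y) = l *: rephased y.
Proof.
move=> hy y0; case: (rephasedZ_i hy y0) => L; [exists 'i | exists (- 'i)] => //.
  exact: sqrCi.
by rewrite sqrrN sqrCi.
Qed.

(* Comparing [rephased ('i *: (y + y0))] with the sum of the two parts forces equal signs. *)
Lemma rephasedZ_i_same y0 l : ipH e y0 = 0 -> y0 != 0 -> l ^+ 2 = -1 ->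
    rephased ('i *: y0) = l *: rephased y0 ->
  forall y, ipH e y = 0 -> rephased ('i *: y) = l *: rephased y.
Proof.
move=> h0 n0 hl L0 y hy; have l0 : l != 0.
  by apply: contra_eq_neq hl => ->; rewrite expr0n /= eq_sym oppr_eq0 oner_eq0.
have ll0 : l + l != 0 by rewrite -mulr2n -mulr_natl mulf_neq0 // pnatr_eq0.
have [->|yn] := eqVneq y 0; first by rewrite !scaler0 rephased0 scaler0.
have [/eqP|s0] := eqVneq (y + y0) 0.
  by rewrite addr_eq0 => /eqP ->; rewrite scalerN !rephasedN ?orthoZ // L0 scalerN.
have [ly hly Ly] := rephasedZ_i_sqrN1 hy yn.
have [ls hls Ls] := rephasedZ_i_sqrN1 (orthoD hy h0) s0.
have key : ls *: (rephased y + rephased y0) = ly *: rephased y + l *: rephased y0.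
  by rewrite -rephasedD // -Ls scalerDr rephasedD ?orthoZ // Ly L0.
have u0 : rephased y != 0 by rewrite rephased_eq0.
have v0 : rephased y0 != 0 by rewrite rephased_eq0.
have /orP[/eqP lyl|/eqP lyl] : (ly == l) || (ly == - l) by rewrite -eqf_sqr hly hl.
  by rewrite Ly lyl.
have /orP[/eqP lsl|/eqP lsl] : (ls == l) || (ls == - l) by rewrite -eqf_sqr hls hl.
  move: key; rewrite lsl lyl scalerDr => /addIr key.
  have /eqP : (l + l) *: rephased y = 0 by rewrite scalerDl {1}key scaleNr addNr.
  by rewrite scaler_eq0 (negPf ll0) (negPf u0).
move: key; rewrite lsl lyl scalerDr => /addrI key.
have /eqP : (l + l) *: rephased y0 = 0 by rewrite scalerDl -{1}key scaleNr addNr.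
by rewrite scaler_eq0 (negPf ll0) (negPf v0).
Qed.

Lemma rephasedZ_i_uniform :
  exists b, forall y, ipH e y = 0 -> rephased ('i *: y) = conj_if b 'i *: rephased y.
Proof.
case: (pselect (exists2 y0, ipH e y0 = 0 & y0 != 0)) => [[y0 h0 n0]|nE].
  have [l hl L] := rephasedZ_i_sqrN1 h0 n0.
  have /orP[/eqP li|/eqP li] : (l == 'i) || (l == - 'i) by rewrite -eqf_sqr hl sqrCi.
    by exists true => y hy; rewrite /= (rephasedZ_i_same h0 n0 hl L hy) li.
  by exists false => y hy; rewrite /= conjCi (rephasedZ_i_same h0 n0 hl L hy) li.
exists true => y hy; have [->|y0] := eqVneq y 0; first by rewrite !scaler0 rephased0 scaler0.
by exfalso; apply: nE; exists y.
Qed.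

Section FixedConjugation.
Variable b : bool.
Hypothesis rephasedZ_i_b : forall y, ipH e y = 0 -> rephased ('i *: y) = conj_if b 'i *: rephased y.

Lemma rephasedZ c y : ipH e y = 0 -> rephased (c *: y) = conj_if b c *: rephased y.
Proof.
move=> hy; have reR : ('Re c)^* = 'Re c by apply/conj_Creal/Creal_Re.
have imR : ('Im c)^* = 'Im c by apply/conj_Creal/Creal_Im.
have -> : c *: y = 'Re c *: y + 'Im c *: ('i *: y) by rewrite scalerA mulrC -scalerDl -Crect.
rewrite rephasedD ?orthoZ // (rephasedZ_real _ reR) // (rephasedZ_real _ imR) ?orthoZ //.
rewrite rephasedZ_i_b // scalerA -scalerDl {3}(Crect c) conj_ifD conj_ifM.
by rewrite (conj_if_real _ reR) (conj_if_real _ imR) (mulrC ('Im c)).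
Qed.

(* The real part of the inner product is preserved; evaluating it at [('i *: z)]
   recovers the imaginary part. *)
Lemma rephased_ip y z : ipH e y = 0 -> ipH e z = 0 ->
  ipK (rephased y) (rephased z) = conj_if b (ipH y z).
Proof.
move=> hy hz; have e1 := rephased_ipD hy hz.
have e2 := rephased_ipD hy (orthoZ 'i hz).
rewrite rephasedZ_i_b // (ipZr hK) (ipZl hK) (ipZr hH) (ipZl hH) in e2.
have i0 := neq0Ci R[i]; have t0 : (2%:R : R[i]) != 0 by rewrite pnatr_eq0.
case: b e2 => /= e2.
  have -> : ipK (rephased y) (rephased z) =
      ((ipK (rephased y) (rephased z) + ipK (rephased z) (rephased y))
      + ('i * ipK (rephased y) (rephased z) + 'i^* * ipK (rephased z) (rephased y)) / 'i) / 2%:R.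
    by rewrite conjCi; field.
  by rewrite e1 e2 conjCi; field.
have -> : ipK (rephased y) (rephased z) =
    ((ipK (rephased y) (rephased z) + ipK (rephased z) (rephased y))
    - ('i^* * ipK (rephased y) (rephased z) + 'i^*^* * ipK (rephased z) (rephased y)) / 'i) / 2%:R.
  by rewrite conjCK conjCi; field.
by rewrite e1 e2 conjCi (ipC hH z y); field.
Qed.

Definition wigner_map x := conj_if b (ipH e x) *: g e + rephased (x - ipH e x *: e).

Lemma wigner_mapD x y : wigner_map (x + y) = wigner_map x + wigner_map y.
Proof.
rewrite /wigner_map (ipDr hH) conj_ifD scalerDl.
have -> : x + y - (ipH e x + ipH e y) *: e = (x - ipH e x *: e) + (y - ipH e y *: e).
  by rewrite scalerDl opprD addrACA.
by rewrite rephasedD ?ortho_sub_ip // addrACA.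
Qed.

Lemma wigner_mapZ c x : wigner_map (c *: x) = conj_if b c *: wigner_map x.
Proof.
rewrite /wigner_map (ipZr hH) conj_ifM -scalerA.
have -> : c *: x - (c * ipH e x) *: e = c *: (x - ipH e x *: e) by rewrite scalerBr scalerA.
by rewrite rephasedZ ?ortho_sub_ip // scalerDr.
Qed.

Lemma wigner_map_ip x y : ipK (wigner_map x) (wigner_map y) = conj_if b (ipH x y).
Proof.
rewrite /wigner_map !(ipDl hK) !(ipDr hK) !(ipZl hK) !(ipZr hK) ge_unit.
rewrite rephased_ortho ?rephased_orthoC ?ortho_sub_ip // rephased_ip ?ortho_sub_ip //.
have -> : ipH (x - ipH e x *: e) (y - ipH e y *: e) = ipH x y - (ipH e x)^* * ipH e y.
  by rewrite !(ipBl hH) !(ipBr hH) !(ipZl hH) !(ipZr hH) e_unit (ipC hH x e); ring.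
rewrite conj_ifD conj_ifN conj_ifM conj_ifJ; ring.
Qed.

Lemma g_scale_parallel z c : z != 0 -> exists mu, g (c *: z) = mu *: g z.
Proof.
move=> z0; exists (ipcoef ipK (g z) (g (c *: z))).
apply: (cauchy_schwarz_eq hK); first by rewrite g_eq0.
by rewrite g_tprob !g_norm !(ipZl hH) !(ipZr hH); ring.
Qed.

Lemma wigner_map_parallel x : exists c, wigner_map x = c *: g x.
Proof.
have [hx|a0] := eqVneq (ipH e x) 0.
  have [c hc] := rephased_parallel hx; exists c.
  by rewrite /wigner_map hx conj_if0 scale0r add0r scale0r subr0.
set a := ipH e x in a0 *.
have x0 : x != 0 by apply: contra_neq a0 => x0; rewrite /a x0 (ip0r hH).
set y := a^-1 *: (x - a *: e).
have hy : ipH e y = 0 by rewrite /y orthoZ // ortho_sub_ip.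
have xy : x - a *: e = a *: y by rewrite /y scalerA mulfV // scale1r.
have ey : e + y = a^-1 *: x by rewrite /y scalerBr scalerA mulVf // scale1r addrC subrK.
have [mu hmu] := g_scale_parallel a^-1 x0.
exists (conj_if b a * (phase y)^-1 * mu).
by rewrite /wigner_map -/a xy rephasedZ // -scalerDr e_add_rephased // ey hmu !scalerA.
Qed.

End FixedConjugation.

Theorem wigner : exists b (V : H -> K),
  [/\ forall x y, V (x + y) = V x + V y,
      forall c x, V (c *: x) = conj_if b c *: V x,
      forall x y, ipK (V x) (V y) = conj_if b (ipH x y) &
      forall x, exists c, V x = c *: g x].
Proof.
have [b Hb] := rephasedZ_i_uniform; exists b, (wigner_map b); split.
- exact: wigner_mapD.
- exact: wigner_mapZ Hb.
- exact: wigner_map_ip Hb.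
- exact: wigner_map_parallel Hb.
Qed.

End Wigner.

Section SemilinearIsometry.
Variables (R : realType) (H K : lmodType R[i]) (ipH : H -> H -> R[i]) (ipK : K -> K -> R[i]).
Hypotheses (hH : is_hilbert ipH) (hK : is_hilbert ipK).
Variables (b : bool) (V : H -> K).
Hypotheses (VD : forall x y, V (x + y) = V x + V y)
  (VZ : forall c x, V (c *: x) = conj_if b c *: V x)
  (V_ip : forall x y, ipK (V x) (V y) = conj_if b (ipH x y)).

Lemma semilin0 : V 0 = 0.
Proof. by have := VZ 0 0; rewrite scale0r conj_if0 scale0r. Qed.

Lemma semilinB x y : V (x - y) = V x - V y.
Proof. by rewrite VD -scaleN1r VZ conj_if_real ?conjCN1 // scaleN1r. Qed.

Lemma semilin_eq0 x : (V x == 0) = (x == 0).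
Proof. by rewrite -(ipxx_eq0 hK) V_ip conj_if_eq0 (ipxx_eq0 hH). Qed.

Lemma semilin_inj : injective V.
Proof. by move=> x y e; apply/eqP; rewrite -subr_eq0 -semilin_eq0 semilinB e subrr. Qed.

End SemilinearIsometry.

Lemma semiunitaryP (R : realType) (H K : lmodType R[i]) (ipH : H -> H -> R[i])
    (ipK : K -> K -> R[i]) (U : H -> K) :
  semiunitary ipH ipK U -> exists b, semiunitary_with ipH ipK (conj_if b) U.
Proof. by case=> h; [exists true|exists false]. Qed.

Section PhaseUniqueness.
Variables (R : realType) (H K : lmodType R[i]) (ipH : H -> H -> R[i]) (ipK : K -> K -> R[i]).
Hypotheses (hH : is_hilbert ipH) (hK : is_hilbert ipK).
Variables (bU bV : bool) (U V : H -> K).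
Hypotheses (sU : semiunitary_with ipH ipK (conj_if bU) U)
  (sV : semiunitary_with ipH ipK (conj_if bV) V)
  (UV_parallel : forall x, exists c, V x = c *: U x).

Definition indep2 (x z : H) := forall a c, a *: x + c *: z = 0 -> a = 0 /\ c = 0.

Lemma indep2_neq0 x z : indep2 x z -> x != 0 /\ z != 0.
Proof.
move=> ixz; split; apply/eqP => e0.
  have := ixz 1 0; rewrite e0 scaler0 scale0r addr0 => /(_ erefl) [/eqP].
  by rewrite oner_eq0.
have := ixz 0 1; rewrite e0 scaler0 scale0r add0r => /(_ erefl) [_ /eqP].
by rewrite oner_eq0.
Qed.

Lemma indep2_not_parallel x y : x != 0 -> ~ (exists l, y = l *: x) -> indep2 x y.
Proof.
move=> x0 ny a c e; have [c0|c0] := eqVneq c 0.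
  split=> //; move/eqP: e; rewrite c0 scale0r addr0 scaler_eq0 (negPf x0) orbF.
  by move/eqP.
exfalso; apply: ny; exists (- a / c); apply: (scalerI c0).
by rewrite scalerA mulrC mulfVK // scaleNr; apply/eqP; rewrite -addr_eq0 addrC e.
Qed.

(* Junk value [0] at [x = 0], where every scalar works. *)
Definition ratio x := xget 0 (fun c => V x = c *: U x).

Lemma ratioP x : V x = ratio x *: U x.
Proof. exact: (xgetPex 0 (UV_parallel x)). Qed.

Lemma ratio_indep2 x z : indep2 x z -> ratio x = ratio z.
Proof.
case: sU sV => _ UD UZ U_ip [_ VD _ _] ixz.
have [x0 z0] := indep2_neq0 ixz.
have : (ratio (x + z) - ratio x) *: U x + (ratio (x + z) - ratio z) *: U z = 0.
  by rewrite !scalerBl addrACA -opprD -!ratioP -scalerDr -UD -ratioP -VD subrr.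
rewrite -(conj_ifK bU (_ - ratio x)) -(conj_ifK bU (_ - ratio z)) -!UZ -UD.
rewrite -(semilin0 UZ) => /(semilin_inj hH hK UD UZ U_ip) /ixz [/eqP h1 /eqP h2].
by move: h1 h2; rewrite !conj_if_eq0 !subr_eq0 => /eqP <- /eqP <-.
Qed.

Lemma ratio_const w1 w2 : indep2 w1 w2 -> forall y, V y = ratio w1 *: U y.
Proof.
move=> i12 y; have [w10 w20] := indep2_neq0 i12.
have [->|y0] := eqVneq y 0.
  by case: sU sV => _ _ UZ _ [_ _ VZ _]; rewrite (semilin0 VZ) (semilin0 UZ) scaler0.
rewrite ratioP; congr (_ *: _).
case: (pselect (exists l, y = l *: w1)) => [[l1 h1]|n1]; last first.
  by rewrite (ratio_indep2 (indep2_not_parallel w10 n1)).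
case: (pselect (exists l, y = l *: w2)) => [[l2 h2]|n2].
  have := i12 l1 (- l2); rewrite scaleNr -h1 -h2 subrr => /(_ erefl) [l10 _].
  by move: y0; rewrite h1 l10 scale0r eqxx.
by rewrite -(ratio_indep2 (indep2_not_parallel w20 n2)) (ratio_indep2 i12).
Qed.

Lemma semiunitary_parallel_phase w1 w2 : indep2 w1 w2 ->
  exists c : R[i], `|c| = 1 /\ forall y, V y = c *: U y.
Proof.
move=> i12; exists (ratio w1); split; last exact: ratio_const i12.
case: sU sV => _ _ _ U_ip [_ _ _ V_ip]; have [w10 _] := indep2_neq0 i12.
have : ipK (V w1) (V w1) = (ratio w1)^* * ratio w1 * ipK (U w1) (U w1).
  by rewrite (ratio_const i12) (ipZl hK) (ipZr hK) mulrA.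
rewrite V_ip U_ip !conj_if_real ?(ipxx_conj hH) // => /eqP.
rewrite -{1}(mul1r (ipH w1 w1)) (inj_eq (mulIf (ipxx_neq0 hH w10))) -normCKC eq_sym.
by rewrite sqrp_eq1 // => /eqP.
Qed.

End PhaseUniqueness.

Section ChuMorphism.
Variables (R : realType) (H K : lmodType R[i]) (ipH : H -> H -> R[i]) (ipK : K -> K -> R[i]).
Hypotheses (hH : is_hilbert ipH) (hK : is_hilbert ipK).
Variables (fs : PH H -> PH K) (fu : LH ipK -> LH ipH).
Hypothesis hchu : chu_morphism (@ebar R H ipH) (@ebar R K ipK) fs fu.
Hypothesis hinj : injective fs.

Definition is_rep (psi : H) (k : K) := ipK k k = ipH psi psi /\
  forall x : PH H, proj1_sig x = span1 psi -> proj1_sig (fs x) = span1 k.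

(** A representative of the image ray with the same norm ([0] for [psi = 0]). *)
Definition rep (psi : H) : K := xget 0 (is_rep psi).

Lemma repP psi : is_rep psi (rep psi).
Proof.
apply: xgetPex; have [->|p0] := eqVneq psi 0.
  exists 0; split=> [|x hx]; first by rewrite (ip0r hK) (ip0r hH).
  by exfalso; exact: (PH_neq0 hx).
case: (proj2_sig (fs (ray_of p0))) => k0 [k00 hk0]; have k0n : k0 != 0 by apply/eqP.
set q := complex.Re (ipH psi psi) / complex.Re (ipK k0 k0).
have qpos : 0 < q by rewrite divr_gt0 // Re_ipxx_gt0.
exists ((Num.sqrt q)%:C *: k0); split.
  rewrite (ipxx_scale_sqrt hK) ?ltW // /q fmorph_div /= !ipxx_Re //.
  by rewrite mulfVK // ipxx_neq0.
move=> x hx; have -> : x = ray_of p0 by apply: PH_val_inj.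
rewrite hk0 span1_scale //; apply/eqP => /(congr1 (@complex.Re R)) /= /eqP.
by rewrite sqrtr_eq0 leNgt qpos.
Qed.

Lemma rep_norm psi : ipK (rep psi) (rep psi) = ipH psi psi.
Proof. by case: (repP psi). Qed.

Lemma rep_neq0 psi : psi != 0 -> rep psi != 0.
Proof. by rewrite -(ipxx_eq0 hK) rep_norm (ipxx_eq0 hH). Qed.

Lemma rep_ray (x : PH H) psi : proj1_sig x = span1 psi -> proj1_sig (fs x) = span1 (rep psi).
Proof. by case: (repP psi) => _; apply. Qed.

Lemma chuC (x : PH H) (S : LH ipK) : (ebar x (fu S))%:C = (ebar (fs x) S)%:C.
Proof. by rewrite hchu. Qed.

Lemma ebar_image_line (x : PH H) psi (k : K) : proj1_sig x = span1 psi -> psi != 0 ->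
  (ebar (fs x) (line hK k))%:C = tprob ipK k (rep psi).
Proof. by move=> hx p0; apply: (ebar_line hK); [exact: rep_ray | exact: rep_neq0 |]. Qed.

Lemma chu_tprob (x : PH H) psi k : proj1_sig x = span1 psi -> psi != 0 ->
  (ebar x (fu (line hK k)))%:C = tprob ipK k (rep psi).
Proof. by move=> hx p0; rewrite chuC (ebar_image_line _ hx p0). Qed.

Section AdjointLine.
Variable phi : H.
Hypothesis phi0 : phi != 0.
Let T := proj1_sig (fu (line hK (rep phi))).

Lemma adjoint_line_mem : T phi.
Proof.
apply: (mem_of_ebar1 hH (r := ray_of phi0)) => //.
rewrite (chu_tprob _ (x := ray_of phi0) (psi := phi)) //.
by rewrite /tprob divff // mulf_neq0 // ipxx_neq0 // rep_neq0.
Qed.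

(* A vector of [T] orthogonal to [phi] would be sent to the ray of [rep phi];
   injectivity of [fs] forbids this. *)
Lemma adjoint_line_ortho x : T x -> ipH phi x = 0 -> x = 0.
Proof.
move=> Tx hx; apply/eqP; apply: contraT => x0.
have e1 : tprob ipK (rep phi) (rep x) = 1.
  by rewrite -(chu_tprob _ (x := ray_of x0) (psi := x)) // (ebar_mem hH (psi := x)).
have := tprob_eq1 hK (rep_neq0 phi0) (rep_neq0 x0) e1; set mu := ipcoef _ _ _ => e2.
have mu0 : mu != 0 by apply: contra_neq (rep_neq0 x0) => m0; rewrite e2 m0 scale0r.
have : ray_of x0 = ray_of phi0.
  apply: hinj; apply: PH_val_inj; rewrite (rep_ray (x := ray_of x0) (psi := x)) //.
  by rewrite (rep_ray (x := ray_of phi0) (psi := phi)) // e2 span1_scale.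
move=> /(congr1 (@proj1_sig _ _)) /= /esym /(eq_span1 phi0) [c c0 hc].
by move: hx; rewrite hc (ipZr hH) => /eqP; rewrite mulf_eq0 (negPf c0) (ipxx_eq0 hH) (negPf phi0).
Qed.

Lemma adjoint_line : T = span1 phi.
Proof.
have cT : closed_subspace ipH T := proj2_sig (fu (line hK (rep phi))).
apply/seteqP; split=> x; last by move=> /span1P [l ->]; apply: (subspaceZ _ cT) adjoint_line_mem.
move=> Tx; apply/span1P; exists (ipcoef ipH phi x); apply/eqP; rewrite -subr_eq0; apply/eqP.
apply: adjoint_line_ortho; last exact: ip_sub_ipcoef.
by apply: (subspaceB cT) => //; apply: (subspaceZ _ cT) adjoint_line_mem.
Qed.

End AdjointLine.

Lemma rep_tprob_eq phi psi : phi != 0 -> psi != 0 ->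
  tprob ipK (rep phi) (rep psi) = tprob ipH phi psi.
Proof.
move=> p0 s0; rewrite -(chu_tprob (x := ray_of s0)) //.
by apply: ebar_line => //; exact: adjoint_line.
Qed.

Lemma rep_tprob x y : ipK (rep x) (rep y) * ipK (rep y) (rep x) = ipH x y * ipH y x.
Proof.
have rep0 : rep 0 = 0 by apply/eqP; rewrite -(ipxx_eq0 hK) rep_norm (ip0r hH).
have [->|x0] := eqVneq x 0; first by rewrite rep0 (ip0l hK) (ip0l hH) !mul0r.
have [->|y0] := eqVneq y 0; first by rewrite rep0 (ip0r hK) (ip0r hH) !mul0r.
have := rep_tprob_eq x0 y0; rewrite /tprob !rep_norm => /eqP.
by rewrite (inj_eq (mulIf _)) ?invr_eq0 ?mulf_neq0 ?ipxx_neq0 // => /eqP.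
Qed.

Section Surjectivity.
Variables (b : bool) (V : H -> K).
Hypotheses (VD : forall x y, V (x + y) = V x + V y)
  (VZ : forall c x, V (c *: x) = conj_if b c *: V x)
  (V_ip : forall x y, ipK (V x) (V y) = conj_if b (ipH x y))
  (V_rep : forall x, exists c, V x = c *: rep x).

Lemma semilin_rep x : x != 0 -> exists2 c, c != 0 & V x = c *: rep x.
Proof.
move=> x0; have [c hc] := V_rep x; exists c => //.
by apply: contra_neq x0 => c0; apply/eqP; rewrite -(semilin_eq0 hH hK V_ip) hc c0 scale0r.
Qed.

Lemma semilin_induces : induces ipH ipK fs V.
Proof.
move=> x psi p0 hx; have [c c0 ->] := semilin_rep (introN eqP p0).
by rewrite span1_scale // (rep_ray hx).
Qed.

(* [fu] of the line of [k] contains a nonzero [p]; then [fs [p]] is that line,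
   i.e. [V p] is parallel to [k]. *)
Lemma semilin_hit x0 k : ipK (V x0) k != 0 -> exists x, V x = k.
Proof.
move=> xk; have x0n : x0 != 0.
  by apply: contraNneq xk => ->; rewrite (semilin0 VZ) (ip0l hK).
have kn : k != 0 by apply: contraNneq xk => ->; rewrite (ip0r hK).
have [c c0 hc] := semilin_rep x0n.
have : (ebar (ray_of x0n) (fu (line hK k)))%:C != 0.
  rewrite (chu_tprob (psi := x0)) // /tprob mulf_neq0 ?invr_eq0 ?mulf_neq0 ?ipxx_neq0 ?rep_neq0 //.
    by rewrite (ipC hK) conjC_eq0; apply: contraNneq xk => rk; rewrite hc (ipZl hK) rk mulr0.
  by apply: contraNneq xk => rk; rewrite hc (ipZl hK) rk mulr0.
move=> /(mem_of_ebar_neq0 hH) [p p0 Tp].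
have t1 : tprob ipK (rep p) k = 1.
  by rewrite tprobC -(chu_tprob (x := ray_of p0)) // (ebar_mem hH (psi := p)).
have ek := tprob_eq1 hK (rep_neq0 p0) kn t1.
have [c' c'0 hc'] := semilin_rep p0.
exists (conj_if b (ipcoef ipK (rep p) k / c') *: p).
by rewrite VZ conj_ifK hc' scalerA mulfVK.
Qed.

Lemma semilin_surj e : V e != 0 -> forall k, exists x, V x = k.
Proof.
move=> e0 k; have [hk|hk] := eqVneq (ipK (V e) k) 0; last exact: semilin_hit hk.
have [x hx] : exists x, V x = k + V e.
  by apply: (semilin_hit (x0 := e)); rewrite (ipDr hK) hk add0r (ipxx_neq0 hK).
by exists (x - e); rewrite (semilinB VD VZ) hx addrK.
Qed.

End Surjectivity.

Lemma exists_semiunitary_inducing e : ipH e e = 1 ->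
  exists U, semiunitary ipH ipK U /\ induces ipH ipK fs U.
Proof.
move=> e1; have [b [V [VD VZ V_ip V_rep]]] := wigner hH hK rep_norm rep_tprob e1.
have Ve : V e != 0 by rewrite (semilin_eq0 hH hK V_ip) -(ipxx_eq0 hH) e1 oner_neq0.
have V_bij : bijective V.
  apply: (inj_surj_bij 0 (semilin_inj hH hK VD VZ V_ip)).
  by move=> k; have [x <-] := semilin_surj VD VZ V_ip V_rep Ve k; exists x.
exists V; split; last exact: semilin_induces V_rep.
by case: b VZ V_ip V_bij => VZ V_ip V_bij; [left|right]; split.
Qed.

End ChuMorphism.

Lemma induces_parallel (R : realType) (H K : lmodType R[i]) (ipH : H -> H -> R[i])
    (ipK : K -> K -> R[i]) (fs : PH H -> PH K) (U V : H -> K) :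
  V 0 = 0 -> induces ipH ipK fs U -> induces ipH ipK fs V ->
  forall x, exists c, V x = c *: U x.
Proof.
move=> V0 iU iV x; have [->|x0] := eqVneq x 0; first by exists 0; rewrite V0 scale0r.
have x0' : x <> 0 by apply/eqP.
have := span1_id (V x); rewrite -(iV (ray_of x0) x x0' erefl) (iU (ray_of x0) x x0' erefl).
by case/span1P => c ->; exists c.
Qed.

Lemma dim_gt2_indep2 (R : realType) (H : lmodType R[i]) :
  dim_gt2 H -> exists w1 w2 : H, indep2 w1 w2.
Proof.
case=> x1 [x2 [x3 h]]; exists x1, x2 => a1 a2 e.
by have := h a1 a2 0; rewrite scale0r addr0 => /(_ e) [].
Qed.

Theorem theorem3p12 (R : realType)
  (H : lmodType R[i]) (ipH : H -> H -> R[i])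
  (K : lmodType R[i]) (ipK : K -> K -> R[i])
  (hH : is_hilbert ipH) (hK : is_hilbert ipK)
  (dH : dim_gt2 H) (dK : dim_gt2 K)
  (fs : PH H -> PH K) (fu : LH ipK -> LH ipH)
  (hchu : chu_morphism (@ebar R H ipH) (@ebar R K ipK) fs fu)
  (hinj : injective fs) :
  (exists U : H -> K, semiunitary ipH ipK U /\ induces ipH ipK fs U) /\
  (forall U V : H -> K,
     semiunitary ipH ipK U -> induces ipH ipK fs U ->
     semiunitary ipH ipK V -> induces ipH ipK fs V ->
     exists c : R[i], `|c| = 1 /\ forall psi : H, V psi = c *: U psi).
Proof.
have [w1 [w2 i12]] := dim_gt2_indep2 dH; have [w10 _] := indep2_neq0 i12.
split.
  have [e e1] := exists_unit_vector hH w10.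
  by have [U hU] := exists_semiunitary_inducing hH hK hchu hinj e1; exists U.
move=> U V sU iU sV iV.
have [bU {}sU] := semiunitaryP sU; have [bV {}sV] := semiunitaryP sV.
apply: (semiunitary_parallel_phase hH hK sU sV _ i12); apply: induces_parallel iU iV.
by case: sV => _ _ VZ _; exact: semilin0 VZ.
Qed.
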